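(* Let $C\subseteq\mathbb F_2^n$ be a binary linear code all of whose nonzero words have Hamming weight at least $4$. Let $(e_1,\dots,e_n)$ be an orthonormal basis of a Euclidean space $E$ and let $\Lambda_C$ be the lattice generated by $\mathbb Z^n=\bigoplus_i\mathbb Z e_i$ together with the vectors $\tfrac12\sum_i x_ie_i$, where $x\in\{0,1\}^n$ runs through the representatives of the words of $C$. Let $w_4$ be the number of words of $C$ of weight $4$, and let $t$ be the number of $2$-element subsets $\{i,j\}\subseteq\{1,\dots,n\}$ such that $i$ and $j$ do not both lie in the support of a single weight-$4$ word of $C$. Then $$s(\Lambda_C)=n+8w_4\quad\text{and}\quad \operatorname{perf}(\Lambda_C)=\frac{n(n+1)}2-t.$$
   Context: For a lattice $\Lambda$, $\min\Lambda=\min_{x\in\Lambda\setminus\{0\}}x\cdot x$, $S(\Lambda)$ is the set of vectors attaining the minimum, and $s(\Lambda)=|S(\Lambda)|/2$. Perfection rank: let $\mathcal S^n$ be the space of real symmetric $n\times n$ matrices and $\mathcal R=\{G\in\mathcal S^n: x^tGx\ge 1\ \forall x\in\mathbb Z^n\setminus\{0\}\}$ the Ryshkov polyhedron (a locally finite polyhedron). If a lattice has minimum $1$ and $G$ is the Gram matrix of one of its bases, $G$ lies in the relative interior of a face of $\mathcal R$ of some dimension $k$ (independent of the basis); the perfection rank is $\operatorname{perf}(\Lambda)=\dim\mathcal S^n-k=\frac{n(n+1)}2-k$ (equivalently, the dimension of the span of $\{xx^t\}$ over the minimal vectors $x$ in coordinates). Perfection rank is invariant under scaling. *)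

From HB Require Import structures.
From mathcomp Require Import all_boot all_order all_algebra.
From mathcomp Require Import reals.
Set Implicit Arguments. Unset Strict Implicit. Unset Printing Implicit Defensive.
Import Order.TTheory GRing.Theory Num.Theory.
Local Open Scope ring_scope.

Definition wt (n : nat) (c : 'rV['F_2]_n) : nat := #|[set i : 'I_n | c 0 i != 0]|.

Definition lift01 (R : realType) (n : nat) (c : 'rV['F_2]_n) : 'rV[R]_n :=
  \row_i (if c 0 i == 0 then 0 else 1).

(* Euclidean inner product w.r.t. the orthonormal basis e_1..e_n (= standard basis). *)
Definition dot (R : realType) (n : nat) (u v : 'rV[R]_n) : R := (u *m v^T) 0 0.

Definition gensC (R : realType) (n : nat) (C : {vspace 'rV['F_2]_n})
  (v : 'rV[R]_n) : Prop :=
  (exists i : 'I_n, v = delta_mx 0 i) \/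
  (exists c : 'rV['F_2]_n, c \in C /\ v = 2^-1 *: lift01 R c).

Definition in_generated (R : realType) (n : nat) (S : 'rV[R]_n -> Prop)
  (v : 'rV[R]_n) : Prop :=
  forall P : 'rV[R]_n -> Prop,
    P 0 -> (forall x y, P x -> P y -> P (x - y)) -> (forall s, S s -> P s) -> P v.

Definition LambdaC (R : realType) (n : nat) (C : {vspace 'rV['F_2]_n}) :=
  in_generated (@gensC R n C).

Definition minimal_vec (R : realType) (n : nat) (L : 'rV[R]_n -> Prop)
  (v : 'rV[R]_n) : Prop :=
  L v /\ v != 0 /\ forall w, L w -> w != 0 -> dot v v <= dot w w.

Definition w4 (n : nat) (C : {vspace 'rV['F_2]_n}) : nat :=
  #|[set c : 'rV['F_2]_n | (c \in C) && (wt c == 4)%N]|.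

Definition tC (n : nat) (C : {vspace 'rV['F_2]_n}) : nat :=
  #|[set p : 'I_n * 'I_n | (p.1 < p.2)%N &&
      ~~ [exists c : 'rV['F_2]_n, [&& c \in C, wt c == 4%N, c 0 p.1 != 0 & c 0 p.2 != 0]]]|.

(* Perfection rank computed from a list enumerating the minimal vectors:
   dimension of the span of the rank-one matrices x^T x (x a minimal vector,
   in the orthonormal coordinates). *)
Definition perf_of (R : realType) (n : nat) (S : seq 'rV[R]_n) : nat :=
  \dim <<[seq (x^T *m x : 'M[R]_n) | x <- S]>>%VS.

From HB Require Import structures.
From mathcomp Require Import all_boot all_order all_algebra.
From mathcomp Require Import reals zify ring lra.
Import Order.TTheory GRing.Theory Num.Theory.
Set Implicit Arguments. Unset Strict Implicit. Unset Printing Implicit Defensive.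
Local Open Scope ring_scope.

(* Every vector of the lattice is k/2 for an integer vector k whose reduction
   mod 2 lies in C, and its norm is |k|^2/4.  If some entry of k is odd, the
   parity word is a nonzero codeword, so at least four entries are odd;
   otherwise a nonzero entry is at least 2 in absolute value.  Hence the
   minimum is 1, attained exactly by the +-e_i and by the +-1/2 vectors
   supported on the weight-4 words: 2n + 16 w4 vectors.  Their outer products
   x^T x span the diagonal matrices and, by inclusion-exclusion over the signs
   on a weight-4 support, the symmetric units E_ij + E_ji for the pairs {i,j}
   inside such a support; conversely every x^T x lies in the span of these
   linearly independent units. *)


Lemma F2_natr m : (m%:R : 'F_2) = (odd m)%:R.
Proof. by rewrite -modn2 Fp_nat_mod. Qed.

Lemma F2_intr (z : int) : (z%:~R : 'F_2) = (odd `|z|)%:R.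
Proof.
case: z => m; first by rewrite -pmulrn [LHS]F2_natr.
by rewrite NegzE mulrNz oppr_pchar2 ?pchar_Fp // -pmulrn [LHS]F2_natr.
Qed.

Lemma F2_natr_eq0 (b : bool) : ((b%:R : 'F_2) == 0) = ~~ b.
Proof. by case: b. Qed.

Lemma F2_neq0E (x : 'F_2) : x = (x != 0)%:R.
Proof. by case: x => [[|[|m]] hm] //; apply/val_inj. Qed.

Lemma intr2_half (R : numFieldType) : (2%:~R / 2 : R) = 1.
Proof. by rewrite -[2%:~R]/(2%:R : R) divff // pnatr_eq0. Qed.

Lemma sum_indicator (R : pzSemiRingType) (T : finType) (P : pred T) (F : T -> R) (q : T) :
  \sum_(p | P p) F p * (p == q)%:R = (P q)%:R * F q.
Proof.
rewrite big_mkcond (bigD1 q) //= big1 => [|p pq]; last by rewrite (negbTE pq) mulr0 if_same.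
by rewrite eqxx mulr1 addr0; case: (P q); rewrite ?mul1r ?mul0r.
Qed.

Lemma card_set_sum (T : finType) (P : pred T) : #|[set i | P i]| = (\sum_i P i)%N.
Proof. by rewrite -sum1_card big_mkcond; apply: eq_bigr => i _; rewrite inE. Qed.

Lemma odd_le_sqr m : (odd m <= m ^ 2)%N.
Proof. by case: m => [|m] //; rewrite (leq_trans (leq_b1 _)) // expn_gt0. Qed.

Section GeneratedSubgroup.

Variables (R : realType) (n : nat) (S : 'rV[R]_n -> Prop).

Lemma in_generated0 : in_generated S 0.
Proof. by move=> P. Qed.

Lemma in_generated_gen s : S s -> in_generated S s.
Proof. by move=> Ss P _ _; apply. Qed.

Lemma in_generatedB x y :
  in_generated S x -> in_generated S y -> in_generated S (x - y).
Proof. by move=> Lx Ly P P0 PB PS; exact: PB (Lx P P0 PB PS) (Ly P P0 PB PS). Qed.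

Lemma in_generatedN x : in_generated S x -> in_generated S (- x).
Proof. by move=> Lx; rewrite -sub0r; apply: in_generatedB => //; apply: in_generated0. Qed.

Lemma in_generatedD x y :
  in_generated S x -> in_generated S y -> in_generated S (x + y).
Proof. by move=> Lx Ly; rewrite -[y]opprK; apply: in_generatedB => //; apply: in_generatedN. Qed.

Lemma in_generated_sum (I : finType) (A : {pred I}) (F : I -> 'rV[R]_n) :
  (forall i, in_generated S (F i)) -> in_generated S (\sum_(i in A) F i).
Proof.
move=> LF; apply: (big_ind (in_generated S)) => [|x y|i _].
- exact: in_generated0.
- exact: in_generatedD.
- exact: LF.
Qed.

End GeneratedSubgroup.

Section HalfIntegralVectors.

Variables (R : realType) (n : nat).
Implicit Types k l : 'I_n -> int.

Definition half_row k : 'rV[R]_n := \row_i ((k i)%:~R / 2).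
Definition parity_row k : 'rV['F_2]_n := \row_i (k i)%:~R.
Definition sqnorm k : nat := \sum_i `|k i| ^ 2.

Lemma half_row_inj k l : half_row k = half_row l -> k =1 l.
Proof.
move=> /rowP e i; move: (e i); rewrite !mxE => /(mulIf _).
by rewrite invr_eq0 pnatr_eq0 => /(_ isT) /intr_inj.
Qed.

Lemma half_row_neq0 k : half_row k != 0 -> exists i, k i != 0.
Proof.
move=> k_nz; apply/existsP; apply: contraNT k_nz => /existsPn k0; apply/eqP/rowP => i.
by rewrite !mxE (eqP (negPn (k0 i))) mul0r.
Qed.

Lemma dot_half_row k : dot (half_row k) (half_row k) = (sqnorm k)%:R / 4.
Proof.
rewrite /dot mxE natr_sum mulr_suml; apply: eq_bigr => i _; rewrite !mxE.
by rewrite natrX natr_absz intr_norm real_normK ?num_real //; field.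
Qed.

Lemma wt_parity_row k : wt (parity_row k) = #|[set i | odd `|k i|]|.
Proof. by apply: eq_card => i; rewrite !inE mxE F2_intr F2_natr_eq0 negbK. Qed.

Lemma wt_parity_row_le_sqnorm k : (wt (parity_row k) <= sqnorm k)%N.
Proof. by rewrite wt_parity_row card_set_sum; apply: leq_sum => i _; apply: odd_le_sqr. Qed.

(* The excess of [sqnorm k] over the weight of its parity is a sum of
   nonnegative terms vanishing exactly when [|k i| <= 1]. *)
Lemma sqnorm_le_wt_parity_row k :
  (sqnorm k <= wt (parity_row k))%N -> forall i, (`|k i| <= 1)%N.
Proof.
rewrite wt_parity_row card_set_sum => le_sq_wt i.
have excess0 : (\sum_j (`|k j| ^ 2 - odd `|k j|) == 0)%N.
  have split_sq : sqnorm k = (\sum_j odd `|k j| + \sum_j (`|k j| ^ 2 - odd `|k j|))%N.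
    by rewrite -big_split; apply: eq_bigr => j _ /=; rewrite subnKC ?odd_le_sqr.
  by move: le_sq_wt; rewrite split_sq -{2}[(\sum_j _)%N]addn0 leq_add2l leqn0.
move: excess0; rewrite sum_nat_eq0 => /forallP /(_ i) /eqP.
by case: (absz (k i)) => [|[|m]] //=; case: odd; nia.
Qed.

Lemma sqnorm_ge_entry k i : (`|k i| ^ 2 <= sqnorm k)%N.
Proof. by rewrite /sqnorm (bigD1 i) //= leq_addr. Qed.

Lemma sqnorm_le_entry k i : (sqnorm k <= `|k i| ^ 2)%N -> forall j, j != i -> k j = 0.
Proof.
rewrite /sqnorm (bigD1 i) //= -{2}[(`|k i| ^ 2)%N]addn0 leq_add2l leqn0 sum_nat_eq0.
move=> /forallP rest0 j ji; move: (rest0 j); rewrite ji /= expn_eq0 andbT.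
by move=> /eqP /eqP; rewrite absz_eq0 => /eqP.
Qed.

End HalfIntegralVectors.

Lemma sum_delta_row (R : pzRingType) n (A : {pred 'I_n}) :
  \sum_(j in A) delta_mx 0 j = \row_j ((j \in A)%:R : R).
Proof.
apply/rowP => i; rewrite summxE mxE big_mkcond (bigD1 i) //= big1 => [|j ji].
  by rewrite !mxE !eqxx addr0; case: (i \in A).
by rewrite !mxE eq_sym (negbTE ji) andbF if_same.
Qed.

Section CodeLattice.

Variables (R : realType) (n : nat) (C : {vspace 'rV['F_2]_n}).
Implicit Types (k l : 'I_n -> int) (v : 'rV[R]_n).

Lemma LambdaC_half_row v :
  LambdaC C v -> exists2 k, v = half_row R k & parity_row k \in C.
Proof.
move=> Lv; apply: (Lv (fun v => exists2 k, v = half_row R k & parity_row k \in C))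
  => [|_ _ [k -> Ck] [l -> Cl]|s [[j ->]|[c [Cc ->]]]].
- exists (fun _ => 0); first by apply/rowP => i; rewrite !mxE mul0r.
  by rewrite (_ : parity_row _ = 0) ?mem0v //; apply/rowP => i; rewrite !mxE.
- exists (fun i => k i - l i); first by apply/rowP => i; rewrite !mxE intrB mulrBl.
  rewrite (_ : parity_row _ = parity_row k - parity_row l) ?memvB //.
  by apply/rowP => i; rewrite !mxE intrB.
- exists (fun i => if i == j then 2 else 0).
    apply/rowP => i; rewrite !mxE eqxx /=; case: (i == j); last by rewrite mul0r.
    by rewrite intr2_half.
  rewrite (_ : parity_row _ = 0) ?mem0v //; apply/rowP => i; rewrite !mxE.
  by case: (i == j); rewrite F2_intr.
- exists (fun i => (c 0 i != 0)%:Z).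
    by apply/rowP => i; rewrite !mxE mulrC; case: (c 0 i == 0).
  rewrite (_ : parity_row _ = c) //; apply/rowP => i.
  by rewrite mxE F2_intr [RHS]F2_neq0E; case: (c 0 i != 0).
Qed.

Lemma LambdaC_basis i : LambdaC C (delta_mx 0 i : 'rV[R]_n).
Proof. by apply: in_generated_gen; left; exists i. Qed.

Lemma LambdaC_word c : c \in C -> LambdaC C (2^-1 *: lift01 R c).
Proof. by move=> Cc; apply: in_generated_gen; right; exists c. Qed.

Definition axis_shaped k :=
  [exists i, (`|k i| == 2)%N && [forall j, (j != i) ==> (k j == 0)]].

Definition halfword_shaped k :=
  [&& parity_row k \in C, wt (parity_row k) == 4%N & [forall i, `|k i| <= 1]%N].

Lemma axis_shaped_LambdaC k : axis_shaped k -> LambdaC C (half_row R k).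
Proof.
move=> /existsP [i /andP [/eqP ki2 /forallP k0]].
have half_row_ei (s : int) : k i = s -> half_row R k = (s%:~R / 2) *: delta_mx 0 i.
  move=> kis; apply/rowP => j; rewrite !mxE eqxx /=; case: eqVneq => [->|ji].
    by rewrite kis mulr1.
  by have /implyP/(_ ji)/eqP -> := k0 j; rewrite mulr0 mul0r.
have [/half_row_ei -> | /half_row_ei ->] : k i = 2 \/ k i = -2 by lia.
  by rewrite intr2_half scale1r; apply: LambdaC_basis.
rewrite mulrNz mulNr intr2_half scaleN1r.
exact: (in_generatedN (LambdaC_basis i)).
Qed.

(* A half-word vector is the generator attached to its parity word, minus
   the basis vectors at its negative entries. *)
Lemma halfword_shaped_LambdaC k : halfword_shaped k -> LambdaC C (half_row R k).
Proof.
move=> /and3P [Ck _ /forallP k_le1].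
have -> : half_row R k = 2^-1 *: lift01 R (parity_row k)
                         - \sum_(j in [set j | k j == -1]) delta_mx 0 j.
  apply/rowP => i; rewrite sum_delta_row !mxE inE F2_intr F2_natr_eq0.
  have [->|[->|->]] : k i = -1 \/ k i = 0 \/ k i = 1 by have := k_le1 i; lia.
  - by rewrite mulrNz /=; field.
  - by rewrite /=; field.
  - by rewrite /=; field.
apply: in_generatedB; first exact: LambdaC_word.
by apply: in_generated_sum => j; apply: LambdaC_basis.
Qed.

Lemma shaped_ext k l : k =1 l ->
  (axis_shaped k || halfword_shaped k) = (axis_shaped l || halfword_shaped l).
Proof.
move=> kl; rewrite /axis_shaped /halfword_shaped (_ : parity_row k = parity_row l); last first.
  by apply/rowP => i; rewrite !mxE kl.
congr (_ || [&& _, _ & _]).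
- by apply: eq_existsb => i; rewrite kl; congr (_ && _); apply: eq_forallb => j; rewrite kl.
- by apply: eq_forallb => i; rewrite kl.
Qed.

Lemma shaped_sqnorm k : axis_shaped k || halfword_shaped k -> sqnorm k = 4%N.
Proof.
case/orP => [/existsP [i /andP [/eqP ki2 /forallP k0]] | /and3P [_ /eqP wt4 /forallP k_le1]].
- rewrite /sqnorm (bigD1 i) //= ki2 big1 // => j ji.
  by have /implyP/(_ ji)/eqP -> := k0 j.
- rewrite -wt4 wt_parity_row card_set_sum; apply: eq_bigr => i _.
  by have := k_le1 i; case: (absz (k i)) => [|[|]].
Qed.

Hypothesis hC : forall c : 'rV['F_2]_n, c \in C -> c != 0 -> (4 <= wt c)%N.

(* Either an entry is odd, and the parity word has weight at least 4, or
   all entries are even and a nonzero entry contributes at least 4. *)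
Lemma code_sqnorm_shape k i : parity_row k \in C -> k i != 0 ->
  (4 <= sqnorm k)%N /\ ((sqnorm k <= 4)%N -> axis_shaped k || halfword_shaped k).
Proof.
move=> Ck ki0; have wt_le := wt_parity_row_le_sqnorm k.
have [par0 | par_nz] := eqVneq (parity_row k) 0.
- have even_ki : ~~ odd `|k i|.
    by move/rowP: par0 => /(_ i); rewrite !mxE F2_intr => /eqP; rewrite F2_natr_eq0.
  have ki_ge2 : (2 <= `|k i|)%N.
    by move: ki0 even_ki; rewrite -absz_eq0; case: (absz (k i)) => [|[|]].
  have sq_ge := sqnorm_ge_entry k i.
  split=> [|sq_le4]; first by nia.
  apply/orP; left; apply/existsP; exists i; apply/andP; split; first by apply/eqP; nia.
  apply/forallP => j; apply/implyP => ji; apply/eqP.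
  by apply: (sqnorm_le_entry _ ji); nia.
- have wt_ge4 := hC Ck par_nz.
  split=> [|sq_le4]; first exact: leq_trans wt_ge4 wt_le.
  have k_le1 := @sqnorm_le_wt_parity_row _ k (leq_trans sq_le4 wt_ge4).
  apply/orP; right; apply/and3P; split=> //; first by apply/eqP; lia.
  by apply/forallP.
Qed.

Lemma LambdaC_dot_ge1 v : LambdaC C v -> v != 0 -> 1 <= dot v v.
Proof.
move=> /LambdaC_half_row [k -> Ck] /half_row_neq0 [i ki0].
have [sq_ge4 _] := code_sqnorm_shape Ck ki0.
by rewrite dot_half_row ler_pdivlMr // mul1r (ler_nat R 4).
Qed.

End CodeLattice.

Lemma dot_delta_mx (R : realType) n (i : 'I_n) : dot (delta_mx 0 i : 'rV[R]_n) (delta_mx 0 i) = 1.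
Proof. by rewrite /dot trmx_delta mul_delta_mx mxE !eqxx. Qed.

Definition supp n (c : 'rV['F_2]_n) := [set i | c 0 i != 0].

Section MinimalVectors.

Variables (R : realType) (n : nat) (C : {vspace 'rV['F_2]_n}).
Implicit Types (f g : {ffun 'I_n -> 'I_5}) (k : 'I_n -> int).

(* Integer vectors with entries in [-2, 2], shifted by 2, so that the candidate
   minimal vectors form a finite set. *)
Definition coef f i : int := (f i)%:Z - 2.

Definition encode k : {ffun 'I_n -> 'I_5} := [ffun i => inord `|k i + 2|].

Lemma coef_inj f g : coef f =1 coef g -> f = g.
Proof.
by move=> fg; apply/ffunP => i; have := fg i; rewrite /coef => ?; apply/val_inj => /=; lia.
Qed.

Lemma coef_encode k : (forall i, (`|k i| <= 2)%N) -> coef (encode k) =1 k.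
Proof. by move=> k_le2 i; rewrite /coef ffunE inordK; have := k_le2 i; lia. Qed.

Definition axis_coefs := [set f | axis_shaped (coef f)].
Definition halfword_coefs := [set f | halfword_shaped C (coef f)].
Definition mincoefs := axis_coefs :|: halfword_coefs.

Definition minvecs : seq 'rV[R]_n := [seq half_row R (coef f) | f <- enum mincoefs].

Lemma uniq_minvecs : uniq minvecs.
Proof.
rewrite map_inj_uniq ?enum_uniq // => f g /half_row_inj; exact: coef_inj.
Qed.

Lemma dot_mincoefs f : f \in mincoefs -> dot (half_row R (coef f)) (half_row R (coef f)) = 1.
Proof. by rewrite !inE => /shaped_sqnorm; rewrite dot_half_row => ->; field. Qed.

Lemma shaped_le2 k : axis_shaped k || halfword_shaped C k -> forall i, (`|k i| <= 2)%N.
Proof.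
case/orP => [/existsP [j /andP [/eqP kj2 /forallP k0]] | /and3P [_ _ /forallP k_le1]] i.
- by case: (eqVneq i j) => [->|ij]; [rewrite kj2 | have /implyP/(_ ij)/eqP -> := k0 i].
- exact: leq_trans (k_le1 i) _.
Qed.

Hypothesis hC : forall c : 'rV['F_2]_n, c \in C -> c != 0 -> (4 <= wt c)%N.

(* A minimal vector has norm at most that of a basis vector, i.e. 1. *)
Lemma minvecsP v : v \in minvecs <-> minimal_vec (LambdaC C) v.
Proof.
split.
- move=> /mapP [f]; rewrite mem_enum => Mf ->; have dot1 := dot_mincoefs Mf.
  split; first by move: Mf; rewrite !inE => /orP [/axis_shaped_LambdaC | /halfword_shaped_LambdaC].
  split=> [|w Lw w_nz]; last by rewrite dot1; exact: (LambdaC_dot_ge1 hC Lw w_nz).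
  by apply/eqP => v0; move: dot1; rewrite v0 /dot mul0mx mxE => /eqP; rewrite eq_sym oner_eq0.
- move=> [/LambdaC_half_row [k -> Ck] [/half_row_neq0 [i ki0] v_min]].
  have e_nz : delta_mx 0 i != 0 :> 'rV[R]_n.
    by apply/eqP => /matrixP /(_ 0 i); rewrite !mxE !eqxx => /eqP; rewrite oner_eq0.
  have shape_k : axis_shaped k || halfword_shaped C k.
    apply: (code_sqnorm_shape hC Ck ki0).2; rewrite -(ler_nat R).
    have := v_min _ (@LambdaC_basis R n C i) e_nz.
    by rewrite dot_half_row dot_delta_mx ler_pdivrMr // mul1r.
  have k_enc := coef_encode (shaped_le2 shape_k).
  apply/mapP; exists (encode k); first by rewrite mem_enum !inE (shaped_ext _ k_enc).
  by apply/rowP => j; rewrite !mxE k_enc.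
Qed.

End MinimalVectors.

Section CountMinimalVectors.

Variables (n : nat) (C : {vspace 'rV['F_2]_n}).

Definition axis_encode (p : 'I_n * bool) : {ffun 'I_n -> 'I_5} :=
  [ffun j => if j == p.1 then (if p.2 then ord_max else ord0) else inord 2].

Lemma coef_axis_encode p j :
  coef (axis_encode p) j = if j == p.1 then (if p.2 then 2 else -2) else 0.
Proof. by rewrite /coef ffunE; case: (j == p.1); [case: p.2 | rewrite inordK]. Qed.

Lemma axis_coefs_image : axis_coefs n = axis_encode @: setT.
Proof.
apply/setP => f; rewrite inE; apply/idP/imsetP => [|[[i b] _ ->]].
- move=> /existsP [i /andP [/eqP fi2 /forallP f0]].
  exists (i, coef f i == 2); first by rewrite inE.
  apply: coef_inj => j; rewrite coef_axis_encode /=.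
  case: eqVneq => [->|ji]; first by case: eqVneq => //; lia.
  by have /implyP/(_ ji)/eqP := f0 j.
- apply/existsP; exists i; rewrite coef_axis_encode eqxx; apply/andP; split.
    by case: b.
  by apply/forallP => j; apply/implyP => ji; rewrite coef_axis_encode (negbTE ji).
Qed.

Lemma card_axis_coefs : #|axis_coefs n| = (2 * n)%N.
Proof.
rewrite axis_coefs_image card_imset ?cardsT ?card_prod ?card_ord ?card_bool 1?mulnC //.
move=> [i b] [i' b'] /ffunP /(_ i) /(congr1 val); rewrite !ffunE /= eqxx.
case: (eqVneq i i') => [<-|_]; first by case: b; case: b'.
by rewrite inordK //; case: b.
Qed.

Definition sign_encode (c : 'rV['F_2]_n) (N : {set 'I_n}) : {ffun 'I_n -> 'I_5} :=
  [ffun i => if c 0 i == 0 then inord 2 else if i \in N then inord 1 else inord 3].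

Lemma coef_sign_encode c N i :
  coef (sign_encode c N) i = if c 0 i == 0 then 0 else if i \in N then -1 else 1.
Proof. by rewrite /coef ffunE; case: (c 0 i == 0); [|case: (i \in N)]; rewrite inordK. Qed.

Lemma parity_sign_encode c N : parity_row (coef (sign_encode c N)) = c.
Proof.
apply/rowP => i; rewrite mxE coef_sign_encode [RHS]F2_neq0E F2_intr.
by case: (c 0 i == 0); [|case: (i \in N)].
Qed.

Lemma sign_encode_halfword c N : c \in C -> wt c = 4%N -> sign_encode c N \in halfword_coefs C.
Proof.
move=> Cc wt4; rewrite inE /halfword_shaped parity_sign_encode; apply/and3P.
split; [exact: Cc | exact/eqP | apply/forallP => i].
by rewrite coef_sign_encode; case: (c 0 i == 0); [|case: (i \in N)].
Qed.

(* Over a weight-4 word [c] the half-word encodings are the sign choices,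
   recorded by the set of negative entries. *)
Lemma halfword_fibre c : c \in C -> wt c = 4%N ->
  [set f in halfword_coefs C | parity_row (coef f) == c] = sign_encode c @: powerset (supp c).
Proof.
move=> Cc wt4; apply/setP => f; rewrite !inE; apply/andP/imsetP => [[]|[N _ ->]].
- move=> /and3P [_ _ /forallP f_le1] /eqP parity_f.
  exists [set i | coef f i == -1].
    rewrite inE; apply/subsetP => i; rewrite !inE => /eqP fi.
    by rewrite -parity_f mxE fi F2_intr.
  apply: coef_inj => i; rewrite coef_sign_encode inE -parity_f mxE F2_intr.
  by have [->|[->|->]] : coef f i = -1 \/ coef f i = 0 \/ coef f i = 1 by have := f_le1 i; lia.
- by rewrite parity_sign_encode; have := sign_encode_halfword N Cc wt4; rewrite inE.
Qed.

Lemma sign_encode_inj c : {in powerset (supp c) &, injective (sign_encode c)}.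
Proof.
move=> N N'; rewrite !inE => /subsetP N_c /subsetP N'_c eNN'; apply/setP => i.
have := congr1 (fun f => coef f i) eNN'; rewrite /= !coef_sign_encode.
case: (boolP (c 0 i == 0)) => [ci0 _ | _]; last by case: (i \in N); case: (i \in N').
have notin (M : {set 'I_n}) : {subset M <= supp c} -> i \notin M.
  by move=> M_c; apply/negP => /M_c; rewrite inE ci0.
by rewrite (negbTE (notin _ N_c)) (negbTE (notin _ N'_c)).
Qed.

Lemma card_halfword_coefs : #|halfword_coefs C| = (16 * w4 C)%N.
Proof.
rewrite -sum1_card (partition_big (fun f => parity_row (coef f))
  (mem [set c | (c \in C) && (wt c == 4%N)])) => [|f]; last first.
  by rewrite !inE => /and3P [Cf wt4 _]; rewrite Cf.
rewrite /w4 -sum1_card big_distrr /=; apply: eq_bigr => c.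
rewrite inE => /andP [Cc /eqP wt4].
rewrite muln1 sum1dep_card (halfword_fibre Cc wt4) card_in_imset; last exact: sign_encode_inj.
by rewrite card_powerset -[#|supp c|]/(wt c) wt4.
Qed.

Lemma size_minvecs (R : realType) : size (minvecs R C) = (2 * (n + 8 * w4 C))%N.
Proof.
rewrite size_map -cardE cardsU card_axis_coefs card_halfword_coefs.
rewrite (_ : _ :&: _ = set0) ?cards0 ?subn0; first lia.
apply/setP => f; rewrite !inE; apply/negP.
move=> /andP [/existsP [i /andP [/eqP fi2 _]] /and3P [_ _ /forallP f_le1]].
by have := f_le1 i; rewrite fi2.
Qed.

End CountMinimalVectors.

Lemma outer_mxE (R : pzRingType) n (y : 'rV[R]_n) a b : (y^T *m y) a b = y 0 a * y 0 b.
Proof. by rewrite !mxE big_ord1 !mxE. Qed.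

Section SymmetricUnits.

Variables (R : realType) (n : nat).
Implicit Types (p q : 'I_n * 'I_n) (M : 'M[R]_n).

Definition sym_unit p : 'M[R]_n := delta_mx p.1 p.2 + delta_mx p.2 p.1.

Lemma sym_unitE p a b : sym_unit p a b = (p == (a, b))%:R + (p == (b, a))%:R.
Proof.
case: p => x y; rewrite /sym_unit !mxE /= !xpair_eqE.
by rewrite (eq_sym x a) (eq_sym y b) (eq_sym x b) (eq_sym y a) [(b == x) && _]andbC.
Qed.

Lemma sym_unit_upper p q : (p.1 <= p.2)%N -> (q.1 <= q.2)%N ->
  sym_unit p q.1 q.2 = (p == q)%:R * (1 + (q.1 == q.2)%:R).
Proof.
case: p q => [x y] [u v] /= le_xy le_uv; rewrite sym_unitE !xpair_eqE.
have -> : (x == v) && (y == u) = [&& x == u, y == v & u == v].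
  apply/andP/and3P => [[/eqP xv /eqP yu] | [/eqP -> /eqP -> /eqP ->]]; last by rewrite eqxx.
  have uv : u = v by apply/val_inj/anti_leq; rewrite le_uv -xv -yu.
  by rewrite xv yu uv eqxx.
by case: (x == u); case: (y == v); case: (u == v); rewrite /= ?mul0r ?mul1r ?addr0.
Qed.

Lemma free_sym_units (D : {set 'I_n * 'I_n}) : {in D, forall p, p.1 <= p.2}%N ->
  free [seq sym_unit p | p <- enum D].
Proof.
move=> D_upper; set t := in_tuple (enum D).
have t_inj : injective (tnth t) by apply/tuple_uniqP/enum_uniq.
have upper j : ((tnth t j).1 <= (tnth t j).2)%N by apply: D_upper; rewrite -mem_enum mem_tnth.
change (free (map_tuple sym_unit t)); apply/freeP => k sum0 i.
have := congr1 (fun M : 'M[R]_n => M (tnth t i).1 (tnth t i).2) sum0.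
have tnthE (j : 'I_(size (enum D))) : [seq sym_unit p | p <- enum D]`_j = sym_unit (tnth t j).
  by rewrite -tnth_map (tnth_nth 0).
rewrite summxE mxE (bigD1 i) //= big1 => [|j ji]; rewrite mxE tnthE sym_unit_upper //.
  rewrite eqxx mul1r addr0 => /eqP; rewrite mulf_eq0 paddr_eq0 ?ler01 ?ler0n // oner_eq0.
  by move=> /orP [/eqP|].
by rewrite (inj_eq t_inj) (negbTE ji) mul0r mulr0.
Qed.

Lemma sym_unit_decomposition M : M^T = M ->
  M = \sum_(p : 'I_n * 'I_n | (p.1 <= p.2)%N) (M p.1 p.2 / (1 + (p.1 == p.2)%:R)) *: sym_unit p.
Proof.
move=> /matrixP M_sym; apply/matrixP => a b; rewrite summxE.
under eq_bigr do rewrite mxE sym_unitE mulrDr.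
rewrite big_split /= !sum_indicator /=.
case: ltngtP => [lt_ab | lt_ba | /val_inj ->].
- by rewrite -val_eqE (ltn_eqF lt_ab) mul0r addr0 mul1r addr0 divr1.
- by rewrite -[b == a]val_eqE (ltn_eqF lt_ba) mul0r add0r mul1r addr0 divr1 -(M_sym a b) mxE.
- by rewrite eqxx mul1r /=; field.
Qed.

Lemma sym_mem_span_units (D : {set 'I_n * 'I_n}) M : M^T = M ->
  (forall p, (p.1 <= p.2)%N -> p \notin D -> M p.1 p.2 = 0) ->
  M \in <<[seq sym_unit p | p <- enum D]>>%VS.
Proof.
move=> M_sym M_off; rewrite (sym_unit_decomposition M_sym); apply: memv_suml => p le_p.
have [pD | pnD] := boolP (p \in D); last by rewrite M_off // mul0r scale0r mem0v.
by apply/memvZ/memv_span/map_f; rewrite mem_enum.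
Qed.

End SymmetricUnits.

Lemma sum_ord_ge m n : (\sum_(j < n) (m <= j) = n - m)%N.
Proof.
elim: n => [|n IHn]; first by rewrite big_ord0.
by rewrite big_ord_recr /= IHn; case: leqP => /=; lia.
Qed.

Lemma sum_ord_sub n : (\sum_(i < n) (n - i) = 'C(n.+1, 2))%N.
Proof.
elim: n => [|n IHn]; first by rewrite big_ord0.
rewrite big_ord_recl subn0 binS bin1 addnC; congr (_ + _)%N.
by rewrite -IHn; apply: eq_bigr => i _; rewrite subSS.
Qed.

Lemma card_upper_pairs n : #|[set p : 'I_n * 'I_n | (p.1 <= p.2)%N]| = 'C(n.+1, 2).
Proof.
rewrite card_set_sum -(pair_bigA _ (fun i j : 'I_n => (i <= j : nat)%N)) -sum_ord_sub.
by apply: eq_bigr => i _; rewrite sum_ord_ge.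
Qed.

Section PerfectionRank.

Variables (R : realType) (n : nat) (C : {vspace 'rV['F_2]_n}).

Definition covered (p : 'I_n * 'I_n) :=
  [exists c : 'rV['F_2]_n, [&& c \in C, wt c == 4%N, c 0 p.1 != 0 & c 0 p.2 != 0]].

Definition covered_pairs :=
  [set p : 'I_n * 'I_n | (p.1 <= p.2)%N && ((p.1 == p.2) || covered p)].

Lemma card_covered_pairs : #|covered_pairs| = ((n * n.+1) %/ 2 - tC C)%N.
Proof.
have := cardsID [set p : 'I_n * 'I_n | (p.1 == p.2) || covered p]
                [set p : 'I_n * 'I_n | (p.1 <= p.2)%N].
rewrite card_upper_pairs bin2 -divn2 mulnC /=.
have -> : [set p : 'I_n * 'I_n | (p.1 <= p.2)%N] :&: [set p | (p.1 == p.2) || covered p]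
          = covered_pairs by apply/setP => p; rewrite !inE.
have -> : [set p : 'I_n * 'I_n | (p.1 <= p.2)%N] :\: [set p | (p.1 == p.2) || covered p]
          = [set p : 'I_n * 'I_n | (p.1 < p.2)%N && ~~ covered p].
  apply/setP => p; rewrite !inE negb_or ltn_neqAle -val_eqE.
  by case: (p.1 <= p.2)%N; rewrite ?andbF ?andbT // andbC.
by rewrite -[#|[set p | _ && ~~ covered p]|]/(tC C) => <-; rewrite addnK.
Qed.

Lemma mincoefs_covered f (a b : 'I_n) : f \in mincoefs C -> a != b ->
  coef f a != 0 -> coef f b != 0 -> covered (a, b).
Proof.
rewrite !inE => /orP [/existsP [i /andP [_ /forallP f0]] | /and3P [Cf wt4 /forallP f_le1]].
- have at_i j : coef f j != 0 -> j = i.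
    by move=> fj; apply/eqP; apply: contraNT fj; exact: (implyP (f0 j)).
  by move=> ab /at_i ai /at_i bi; rewrite ai bi eqxx in ab.
- move=> _ fa fb; apply/existsP; exists (parity_row (coef f)); rewrite Cf wt4 /= !mxE !F2_intr.
  have odd_of j : coef f j != 0 -> odd `|coef f j|.
    by have := f_le1 j; rewrite -absz_eq0; case: (absz _) => [|[|]].
  by rewrite (odd_of a) ?(odd_of b).
Qed.

Local Notation outer_minvecs := [seq (x^T *m x : 'M[R]_n) | x <- minvecs R C].
Local Notation covered_units := [seq sym_unit R p | p <- enum covered_pairs].

Lemma outer_mem_span f : f \in mincoefs C ->
  (half_row R (coef f))^T *m half_row R (coef f) \in <<outer_minvecs>>%VS.
Proof. by move=> Mf; apply/memv_span/map_f/map_f; rewrite mem_enum. Qed.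

Lemma outer_minvecs_sub_span : (<<outer_minvecs>> <= <<covered_units>>)%VS.
Proof.
apply/span_subvP => _ /mapP [_ /mapP [f Mf ->] ->]; rewrite mem_enum in Mf.
apply: sym_mem_span_units => [|[a b] /= le_ab]; first by rewrite trmx_mul trmxK.
rewrite inE /= le_ab /= negb_or -val_eqE => /andP [ab not_cov]; rewrite outer_mxE !mxE.
have [->|fa] := eqVneq (coef f a) 0; first by rewrite !mul0r.
have [->|fb] := eqVneq (coef f b) 0; first by rewrite mul0r mulr0.
by have := mincoefs_covered Mf ab fa fb; rewrite (negbTE not_cov).
Qed.

Lemma diag_unit_mem_span i : sym_unit R (i, i) \in <<outer_minvecs>>%VS.
Proof.
have -> : sym_unit R (i, i) = 2 *: ((delta_mx 0 i : 'rV_n)^T *m delta_mx 0 i).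
  by rewrite trmx_delta mul_delta_mx /sym_unit scaler_nat mulr2n.
have -> : delta_mx 0 i = half_row R (coef (axis_encode (i, true))).
  by apply/rowP => j; rewrite !mxE coef_axis_encode /=; case: (j == i); rewrite ?mul0r ?intr2_half.
apply/memvZ/outer_mem_span; rewrite inE axis_coefs_image; apply/orP; left.
exact: imset_f.
Qed.

(* Inclusion-exclusion over the signs at [i] and [j]. *)
Lemma offdiag_unit_mem_span i j : i != j -> covered (i, j) ->
  sym_unit R (i, j) \in <<outer_minvecs>>%VS.
Proof.
move=> ij /existsP [c /and4P [Cc /eqP wt4 ci cj]].
pose X N := (half_row R (coef (sign_encode c N)))^T *m half_row R (coef (sign_encode c N)).
have X_span N : X N \in <<outer_minvecs>>%VS.
  by apply: outer_mem_span; rewrite inE sign_encode_halfword ?orbT.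
have signE N a : ((coef (sign_encode c N) a)%:~R : R) =
                 (c 0 a != 0)%:R * (if a \in N then -1 else 1).
  rewrite coef_sign_encode; case: (c 0 a == 0); first by rewrite /= mul0r.
  by case: (a \in N); rewrite /= mul1r.
have -> : sym_unit R (i, j) = X set0 - X [set i] - X [set j] + X [set i; j].
{ apply/matrixP => a b; rewrite sym_unitE !mxE !big_ord1 !mxE !signE !inE /= !xpair_eqE.
  have u_ij : ((i == a) && (j == b)) || ((i == b) && (j == a)) ->
              (c 0 a != 0)%:R * (c 0 b != 0)%:R = 1 :> R.
    by case/orP => /andP [/eqP <- /eqP <-]; rewrite ?ci ?cj mul1r.
  have not_ij x : ~~ ((x == i) && (x == j)) by apply: contra ij => /andP [/eqP <- /eqP <-].
  move: u_ij (not_ij a) (not_ij b); rewrite ![i == _]eq_sym ![j == _]eq_sym.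
  move: ((c 0 a != 0)%:R : R) ((c 0 b != 0)%:R : R) => ua ub.
  move: (a == i) (a == j) (b == i) (b == j) => [] [] [] [] //= u_ij _ _.
  all: try have {}u_ij := u_ij isT; nra. }
by rewrite memvD ?memvB ?X_span.
Qed.

Lemma span_outer_minvecs : <<outer_minvecs>>%VS = <<covered_units>>%VS.
Proof.
apply/eqP; rewrite eqEsubv outer_minvecs_sub_span; apply/span_subvP => _ /mapP [[i j] + ->].
rewrite mem_enum inE /= => /andP [_]; case: eqVneq => [<- _ | ij /= cov_ij].
- exact: diag_unit_mem_span.
- exact: offdiag_unit_mem_span.
Qed.

Lemma perf_minvecs : perf_of (minvecs R C) = ((n * n.+1) %/ 2 - tC C)%N.
Proof.
rewrite /perf_of span_outer_minvecs.
have /eqP -> : free covered_units by apply: free_sym_units => p; rewrite inE => /andP [].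
by rewrite size_map -cardE card_covered_pairs.
Qed.

End PerfectionRank.

Unset Implicit Arguments.

Theorem proposition7p2 (R : realType) (n : nat) (C : {vspace 'rV['F_2]_n})
  (hC : forall c : 'rV['F_2]_n, c \in C -> c != 0 -> (4 <= wt c)%N) :
  exists S : seq 'rV[R]_n,
    [/\ uniq S,
        (forall v, v \in S <-> minimal_vec (@LambdaC R n C) v),
        size S = (2 * (n + 8 * w4 C))%N
      & perf_of S = ((n * n.+1) %/ 2 - tC C)%N].
Proof.
exists (minvecs R C); split.
- exact: uniq_minvecs.
- exact: minvecsP.
- exact: size_minvecs.
- exact: perf_minvecs.
Qed.
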